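(* Let $\Theta$ be a q$\L^{*}$-theory. Then $[\Theta]_\sim=\{[p]_\sim\in [F(V)]_\sim: p\in \Theta\}$ is a filter of the MV*-algebra $\langle [F(V)]_\sim;\oplus, -, [0]_\sim, [1]_\sim \rangle$.
   Context: Let $V=\{p_1,p_2,\ldots\}$ be a set of propositional variables and $F(V)$ the set of formulas built from $V$ with connectives $\to$, $\neg$, $^{+}$, $^{-}$ and constant $1$; $p\leftrightarrow q$ abbreviates ''$p\to q$ and $q\to p$'', and $p\vee q = ((p^{+}\to q^{+})^{+}\to(\neg p)^{-})\to((q^{-}\to p^{-})^{-}\to p^{-})$. The logic q$\L^{*}$ has axiom schemas: (Q1) $(p\to q)\leftrightarrow (\neg q\to \neg p)$; (Q2) $1\leftrightarrow ((1\to p)\to 1)$; (Q3) $p\leftrightarrow ((q\to q)\to p)$; (Q4) $(p\to q)\leftrightarrow((q^{+}\to p^{-})\to (p^{+}\to q^{-}))$; (Q5) $\neg(p\to q)\leftrightarrow (q\to p)$; (Q6) $(p\to (\neg p\to q))^+\leftrightarrow (p^+\to (\neg p^+\to q^+))$; (Q7) $(p\to (q\vee r))\leftrightarrow((p\to r)\vee (p\to q))$; (Q8) $(p\vee (q\vee r))\leftrightarrow ((p\vee q)\vee r)$; (Q9) $((p\to 1)\to((q\to 1)\to r))\to ((q\to 1)\to((p\to 1)\to r))$; (Q10) $p\to 1$; (Q11) $(1\to 1)\to p^{+}\leftrightarrow(p\to 1)\to 1$ and $(1\to 1)\to p^{-}\leftrightarrow(p\to \neg 1)\to \neg 1$; and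 deduction rules (R1) $p, p\to q\vdash (r\to r)\to q$; (R2) $(r\to r)\to(p\to q)\vdash p\to q$; (R3) $p\to q, r\to t\vdash (q\to r)\to (p\to t)$. Provability $\vdash$ and $\Gamma\vdash$ (proofs using axioms, members of $\Gamma$ and the rules) are defined as usual; $\Gamma^{\vdash}$ is the set of formulas provable from $\Gamma$, and a q$\L^{*}$-theory is a set $\Theta\subseteq F(V)$ with $\Theta^{\vdash}=\Theta$. The relation $p\sim q$ iff $\vdash p\leftrightarrow q$ is a congruence on $F(V)$ with respect to $\to,\neg,^{+},^{-}$; $[p]_\sim$ denotes the class of $p$ and $[F(V)]_\sim$ the set of classes, with $\neg[p]_\sim=[\neg p]_\sim$, $[p]_\sim\to[q]_\sim=[p\to q]_\sim$, $([p]_\sim)^{\pm}=[p^{\pm}]_\sim$. Define $-[p]_\sim=\neg[p]_\sim$, $[p]_\sim\oplus[q]_\sim=\neg[p]_\sim\to[q]_\sim$ and $[0]_\sim=[p\to p]_\sim$; then $\langle [F(V)]_\sim;\oplus,-,[0]_\sim,[1]_\sim\rangle$ is an MV*-algebra. For an MV*-algebra $\mathbf{M}$ with $x^{+}=1\oplus(-1\oplus x)$ and $y\ominus x=y\oplus(-x)$, a subset $F\subseteq M$ is a filter if (F1) $M^+=\{x^+:x\in M\}\subseteq F$; (F2) if $x\in F$ and $y\ominus x\in F$ then $y\in F$; (F3) if $x\oplus y\in F$ and $t\in M$ then $(x\oplus t)\oplus(y\ominus t)\in F$. *)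

From Stdlib Require Import ClassicalEpsilon.

Inductive form : Type :=
  | Var : nat -> form
  | Imp : form -> form -> form
  | Neg : form -> form
  | Pl  : form -> form
  | Mi  : form -> form
  | One : form.

Definition Or (p q : form) : form :=
  Imp (Imp (Pl (Imp (Pl p) (Pl q))) (Mi (Neg p)))
      (Imp (Mi (Imp (Mi q) (Mi p))) (Mi p)).

(* "a <-> b" abbreviates the two formulas a -> b and b -> a;
   an axiom schema "a <-> b" thus contributes both. *)
Definition iffax (a b x : form) : Prop := x = Imp a b \/ x = Imp b a.

Inductive axiom : form -> Prop :=
  | Q1 p q x : iffax (Imp p q) (Imp (Neg q) (Neg p)) x -> axiom x
  | Q2 p x : iffax One (Imp (Imp One p) One) x -> axiom x
  | Q3 p q x : iffax p (Imp (Imp q q) p) x -> axiom x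
  | Q4 p q x : iffax (Imp p q) (Imp (Imp (Pl q) (Mi p)) (Imp (Pl p) (Mi q))) x -> axiom x
  | Q5 p q x : iffax (Neg (Imp p q)) (Imp q p) x -> axiom x
  | Q6 p q x : iffax (Pl (Imp p (Imp (Neg p) q)))
                     (Imp (Pl p) (Imp (Neg (Pl p)) (Pl q))) x -> axiom x
  | Q7 p q r x : iffax (Imp p (Or q r)) (Or (Imp p r) (Imp p q)) x -> axiom x
  | Q8 p q r x : iffax (Or p (Or q r)) (Or (Or p q) r) x -> axiom x
  | Q9 p q r : axiom (Imp (Imp (Imp p One) (Imp (Imp q One) r))
                          (Imp (Imp q One) (Imp (Imp p One) r)))
  | Q10 p : axiom (Imp p One)
  | Q11a p x : iffax (Imp (Imp One One) (Pl p)) (Imp (Imp p One) One) x -> axiom x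
  | Q11b p x : iffax (Imp (Imp One One) (Mi p))
                     (Imp (Imp p (Neg One)) (Neg One)) x -> axiom x.

Inductive derivable (Gamma : form -> Prop) : form -> Prop :=
  | D_ax p : axiom p -> derivable Gamma p
  | D_hyp p : Gamma p -> derivable Gamma p
  | R1 p q r : derivable Gamma p -> derivable Gamma (Imp p q) ->
               derivable Gamma (Imp (Imp r r) q)
  | R2 p q r : derivable Gamma (Imp (Imp r r) (Imp p q)) ->
               derivable Gamma (Imp p q)
  | R3 p q r t : derivable Gamma (Imp p q) -> derivable Gamma (Imp r t) ->
                 derivable Gamma (Imp (Imp q r) (Imp p t)).

Definition provable (p : form) : Prop := derivable (fun _ => False) p.

Definition theory (Theta : form -> Prop) : Prop :=
  forall p, derivable Theta p <-> Theta p.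

Definition sim (p q : form) : Prop := provable (Imp p q) /\ provable (Imp q p).

Definition cls (p : form) : form -> Prop := fun q => sim p q.
Definition Quot : Type := { X : form -> Prop | exists p, X = cls p }.
Definition qcls (p : form) : Quot := exist _ (cls p) (ex_intro _ p eq_refl).
Definition rep (X : Quot) : form :=
  proj1_sig (constructive_indefinite_description _ (proj2_sig X)).

(* MV*-operations on [F(V)]_~ (well defined since ~ is a congruence) *)
Definition qneg (X : Quot) : Quot := qcls (Neg (rep X)).
Definition qoplus (X Y : Quot) : Quot := qcls (Imp (Neg (rep X)) (rep Y)).
Definition qone : Quot := qcls One.
Definition qzero : Quot := qcls (Imp (Var 0) (Var 0)).

Definition is_filter {M : Type} (oplus : M -> M -> M) (neg : M -> M) (one : M)
    (F : M -> Prop) : Prop :=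
  let plus x := oplus one (oplus (neg one) x) in
  let ominus y x := oplus y (neg x) in
  (forall x, F (plus x)) /\
  (forall x y, F x -> F (ominus y x) -> F y) /\
  (forall x y t, F (oplus x y) -> F (oplus (oplus x t) (ominus y t))).

Definition qset (Theta : form -> Prop) : Quot -> Prop :=
  fun X => exists p, Theta p /\ X = qcls p.

(* Since Theta is closed under the rules, [p] lies in [Theta] exactly when
   Theta derives (1 -> 1) -> p (rules R1 and axiom Q3 pass between the two).
   The three filter conditions then become derivability facts about
   representatives: x^+ is the class of an instance (x -> 1) -> 1 of Q10;
   (F2) chains (1 -> 1) -> x with x -> y, the contrapositive (Q1) of the
   hypothesis -y -> -x; and (F3) follows from -x -> y by Q5, monotonicity
   of t -> _ under R3, and Q1. *)

From Stdlib Require Import ClassicalEpsilon ProofIrrelevance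
  FunctionalExtensionality PropExtensionality.

Section Derivable.
Variable Gamma : form -> Prop.

Lemma derivable_iffax_l a b :
  (forall x, iffax a b x -> axiom x) -> derivable Gamma (Imp a b).
Proof. intro Hab; apply D_ax, Hab; left; reflexivity. Qed.

Lemma derivable_iffax_r a b :
  (forall x, iffax a b x -> axiom x) -> derivable Gamma (Imp b a).
Proof. intro Hab; apply D_ax, Hab; right; reflexivity. Qed.

(* R1 only yields (r -> r) -> _; R2 strips that prefix when the conclusion is
   itself an implication. *)
Lemma derivable_mp a b c :
  derivable Gamma a -> derivable Gamma (Imp a (Imp b c)) ->
  derivable Gamma (Imp b c).
Proof. intros Ha Habc; apply (R2 _ _ _ One), (R1 _ a); assumption. Qed.

Lemma derivable_imp_refl c : derivable Gamma (Imp c c).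
Proof.
  set (X := Imp (Imp One One) c).
  set (Y := Imp (Imp One One) X).
  assert (HYY : derivable Gamma (Imp Y Y)) by apply D_ax, (Q9 One One c).
  assert (HXX : derivable Gamma (Imp X X)).
  { apply (derivable_mp _ _ _ HYY), R3;
      [apply derivable_iffax_l | apply derivable_iffax_r]; exact (Q3 X One). }
  apply (derivable_mp _ _ _ HXX), R3;
    [apply derivable_iffax_l | apply derivable_iffax_r]; exact (Q3 c One).
Qed.

Lemma derivable_imp_trans a b c :
  derivable Gamma (Imp a b) -> derivable Gamma (Imp b c) ->
  derivable Gamma (Imp a c).
Proof.
  intros Hab Hbc.
  apply (derivable_mp _ _ _ Hbc), R3; [exact Hab | apply derivable_imp_refl].
Qed.

Lemma derivable_contra a b :
  derivable Gamma (Imp a b) -> derivable Gamma (Imp (Neg b) (Neg a)).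
Proof.
  intro Hab; apply (derivable_mp _ _ _ Hab), derivable_iffax_l; exact (Q1 a b).
Qed.

Lemma derivable_contra_inv a b :
  derivable Gamma (Imp (Neg b) (Neg a)) -> derivable Gamma (Imp a b).
Proof.
  intro Hba; apply (derivable_mp _ _ _ Hba), derivable_iffax_r; exact (Q1 a b).
Qed.

Lemma derivable_verum_imp a b :
  derivable Gamma (Imp a b) <-> derivable Gamma (Imp (Imp One One) (Imp a b)).
Proof.
  split; [intro Hab | apply R2].
  apply (derivable_mp _ _ _ Hab), derivable_iffax_l; exact (Q3 (Imp a b) One).
Qed.

Lemma derivable_oplus_ominus x y t :
  derivable Gamma (Imp (Neg x) y) ->
  derivable Gamma (Imp (Neg (Imp (Neg x) t)) (Imp (Neg y) (Neg t))).
Proof.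
  intro Hxy.
  apply derivable_imp_trans with (Imp t (Neg x)).
  { apply derivable_iffax_l; exact (Q5 (Neg x) t). }
  apply derivable_imp_trans with (Imp t y).
  - apply R3; [apply derivable_imp_refl | exact Hxy].
  - apply derivable_iffax_l; exact (Q1 t y).
Qed.

End Derivable.

Lemma derivable_of_provable Gamma p : provable p -> derivable Gamma p.
Proof.
  induction 1 as [| p [] | | |].
  - now apply D_ax.
  - now apply R1 with p.
  - now apply R2 with r.
  - now apply R3.
Qed.

Lemma sim_iffax a b : (forall x, iffax a b x -> axiom x) -> sim a b.
Proof.
  split; [apply derivable_iffax_l | apply derivable_iffax_r]; assumption.
Qed.

Lemma sim_refl a : sim a a.
Proof. split; apply derivable_imp_refl. Qed.

Lemma sim_sym a b : sim a b -> sim b a.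
Proof. intros [Hab Hba]; split; assumption. Qed.

Lemma sim_trans a b c : sim a b -> sim b c -> sim a c.
Proof. intros [] []; split; eapply derivable_imp_trans; eassumption. Qed.

Lemma sim_neg a b : sim a b -> sim (Neg a) (Neg b).
Proof. intros []; split; apply derivable_contra; assumption. Qed.

Lemma sim_imp a b c d : sim a b -> sim c d -> sim (Imp a c) (Imp b d).
Proof. intros [] []; split; apply R3; assumption. Qed.

Lemma sim_neg_neg_one : sim (Neg (Neg One)) One.
Proof.
  assert (HOne : sim One (Imp (Imp One One) One)) by exact (sim_iffax _ _ (Q3 One One)).
  assert (HNegOne : sim (Neg One) (Imp One (Imp One One))).
  { apply sim_trans with (Neg (Imp (Imp One One) One));
      [apply sim_neg, HOne | exact (sim_iffax _ _ (Q5 (Imp One One) One))]. }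
  apply sim_trans with (Neg (Imp One (Imp One One))); [now apply sim_neg|].
  apply sim_trans with (Imp (Imp One One) One); [exact (sim_iffax _ _ (Q5 One _))|].
  now apply sim_sym.
Qed.

Lemma sim_plus x :
  sim (Imp (Neg One) (Imp (Neg (Neg One)) x)) (Imp (Imp x One) One).
Proof.
  apply sim_trans with (Imp (Neg One) (Imp One x)).
  { apply sim_imp, sim_imp; [apply sim_refl | apply sim_neg_neg_one | apply sim_refl]. }
  apply sim_trans with (Imp (Neg (Imp One x)) (Neg (Neg One))).
  { exact (sim_iffax _ _ (Q1 (Neg One) (Imp One x))). }
  apply sim_imp; [exact (sim_iffax _ _ (Q5 One x)) | apply sim_neg_neg_one].
Qed.

Lemma qcls_eqP a b : qcls a = qcls b <-> sim a b.
Proof.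
  split; intro Hab.
  - assert (Hcls : cls a = cls b) by exact (f_equal (@proj1_sig _ _) Hab).
    pose proof (sim_refl b) as Hb; change (cls b b) in Hb.
    now rewrite <- Hcls in Hb.
  - apply subset_eq_compat, functional_extensionality; intro q.
    apply propositional_extensionality; unfold cls.
    split; apply sim_trans; [now apply sim_sym | assumption].
Qed.

Lemma qcls_rep X : qcls (rep X) = X.
Proof.
  destruct X as [S HS]; unfold rep, qcls; simpl.
  destruct (constructive_indefinite_description _ HS) as [p ->].
  now apply subset_eq_compat.
Qed.

Lemma rep_qcls p : sim (rep (qcls p)) p.
Proof. apply qcls_eqP, qcls_rep. Qed.

Lemma qneg_qcls a : qneg (qcls a) = qcls (Neg a).
Proof. apply qcls_eqP, sim_neg, rep_qcls. Qed.

Lemma qoplus_qcls a b : qoplus (qcls a) (qcls b) = qcls (Imp (Neg a) b).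
Proof. apply qcls_eqP, sim_imp; [apply sim_neg|]; apply rep_qcls. Qed.

Section TheoryClasses.
Variable Theta : form -> Prop.
Hypothesis HTheta : theory Theta.

Lemma qset_qcls p :
  qset Theta (qcls p) <-> derivable Theta (Imp (Imp One One) p).
Proof.
  split.
  - intros [s [Hs Hsp]].
    apply (R1 _ s); [now apply D_hyp|].
    apply derivable_of_provable, qcls_eqP; congruence.
  - intro Hp; exists (Imp (Imp One One) p); split; [now apply HTheta|].
    apply qcls_eqP; exact (sim_iffax _ _ (Q3 p One)).
Qed.

Lemma qset_qcls_imp a b : qset Theta (qcls (Imp a b)) <-> derivable Theta (Imp a b).
Proof. rewrite qset_qcls; symmetry; apply derivable_verum_imp. Qed.

Lemma qset_plus x : qset Theta (qoplus qone (qoplus (qneg qone) x)).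
Proof.
  rewrite <- (qcls_rep x); unfold qone.
  rewrite qneg_qcls, !qoplus_qcls.
  replace (qcls _) with (qcls (Imp (Imp (rep x) One) One))
    by (apply qcls_eqP, sim_sym, sim_plus).
  apply qset_qcls_imp, D_ax, Q10.
Qed.

Lemma qset_mp x y : qset Theta x -> qset Theta (qoplus y (qneg x)) -> qset Theta y.
Proof.
  rewrite <- (qcls_rep x), <- (qcls_rep y), qneg_qcls, qoplus_qcls.
  rewrite qset_qcls_imp, (qset_qcls (rep x)), qset_qcls.
  intros Hx Hyx; apply (derivable_imp_trans _ _ _ _ Hx).
  apply derivable_contra_inv, Hyx.
Qed.

Lemma qset_oplus_ominus x y t :
  qset Theta (qoplus x y) -> qset Theta (qoplus (qoplus x t) (qoplus y (qneg t))).
Proof.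
  rewrite <- (qcls_rep x), <- (qcls_rep y), <- (qcls_rep t).
  rewrite qneg_qcls, !qoplus_qcls, !qset_qcls_imp.
  apply derivable_oplus_ominus.
Qed.

End TheoryClasses.

Theorem proposition4p5 (Theta : form -> Prop) :
  theory Theta -> is_filter qoplus qneg qone (qset Theta).
Proof.
  intro HTheta; split; [|split].
  - intro x; apply qset_plus, HTheta.
  - intros x y; apply qset_mp, HTheta.
  - intros x y t; apply qset_oplus_ominus, HTheta.
Qed.
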